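(* Let $(a_n)\in\ell_1$ with $\sum_n|a_n|=1$ and $\frac12<\sup_{n\in\mathbb N}|a_n|<1$. Then the hyperplane $Y=\{x\in c_0:\sum_n a_nx_n=0\}$ has property-$(SU)$ in $c_0$ but does not have property-$(HB)$ in $c_0$.
   Context: $c_0$ carries the sup norm and $c_0^*=\ell_1$. $Y^\perp=\{x^*\in\ell_1:x^*|_Y=0\}$. $Y$ has property-$(SU)$ in $X$ if there is a bounded linear projection $P$ on $X^*$ with range $Y^\perp$ such that, with $G=(I-P)(X^* )$, for every $x^*=y^\#+y^\perp$ with $y^\#\in G$, $0\ne y^\perp\in Y^\perp$, one has $\|x^*\|>\|y^\#\|$. $Y$ has property-$(HB)$ in $X$ if moreover such a $P$ can be chosen with $\|P\|=1$ and also $\|x^*\|\ge\|y^\perp\|$ for all such decompositions. *)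

From Stdlib Require Import Reals.
From Coquelicot Require Import Coquelicot.
Open Scope R_scope.

Definition seqR := nat -> R.

Definition in_c0 (x : seqR) : Prop := is_lim_seq x 0.

(* ell_1 = c_0^* *)
Definition in_l1 (b : seqR) : Prop := ex_series (fun n => Rabs (b n)).
Definition l1norm (b : seqR) : R := Series (fun n => Rabs (b n)).

Definition pairing (b x : seqR) : R := Series (fun n => b n * x n).

Definition seq_add (u v : seqR) : seqR := fun n => u n + v n.
Definition seq_sub (u v : seqR) : seqR := fun n => u n - v n.
Definition seq_scal (c : R) (u : seqR) : seqR := fun n => c * u n.
Definition seq_zero : seqR := fun _ => 0.

Definition annihilator (Y : seqR -> Prop) (b : seqR) : Prop :=
  in_l1 b /\ forall y, Y y -> pairing b y = 0.

Definition bdd_lin_proj_onto (P : seqR -> seqR) (M : seqR -> Prop) : Prop :=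
  (forall x, in_l1 x -> in_l1 (P x)) /\
  (forall x y, in_l1 x -> in_l1 y -> P (seq_add x y) = seq_add (P x) (P y)) /\
  (forall c x, in_l1 x -> P (seq_scal c x) = seq_scal c (P x)) /\
  (exists C, forall x, in_l1 x -> l1norm (P x) <= C * l1norm x) /\
  (forall x, in_l1 x -> P (P x) = P x) /\
  (forall x, in_l1 x -> M (P x)) /\
  (forall m, M m -> exists x, in_l1 x /\ P x = m).

Definition compl_range (P : seqR -> seqR) (g : seqR) : Prop :=
  exists x, in_l1 x /\ g = seq_sub x (P x).

Definition SU_ineq (Y : seqR -> Prop) (P : seqR -> seqR) : Prop :=
  forall g yp, compl_range P g -> annihilator Y yp -> yp <> seq_zero ->
    l1norm (seq_add g yp) > l1norm g.

Definition opnorm_eq1 (P : seqR -> seqR) : Prop :=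
  (forall x, in_l1 x -> l1norm (P x) <= 1 * l1norm x) /\
  (forall c, (forall x, in_l1 x -> l1norm (P x) <= c * l1norm x) -> 1 <= c).

Definition property_SU (Y : seqR -> Prop) : Prop :=
  exists P, bdd_lin_proj_onto P (annihilator Y) /\ SU_ineq Y P.

Definition property_HB (Y : seqR -> Prop) : Prop :=
  exists P, bdd_lin_proj_onto P (annihilator Y) /\ SU_ineq Y P /\
    opnorm_eq1 P /\
    (forall g yp, compl_range P g -> annihilator Y yp -> yp <> seq_zero ->
       l1norm (seq_add g yp) >= l1norm yp).

Definition hyperplane (a : seqR) (x : seqR) : Prop :=
  in_c0 x /\ pairing a x = 0.

From Stdlib Require Import Reals Lra Lia FunctionalExtensionality Classical.
From Coquelicot Require Import Coquelicot.
Open Scope R_scope.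

(* Let k be an index with |a_k| > 1/2; it exists because the supremum exceeds 1/2.
   The annihilator of Y is the line spanned by a, and x* |-> (x*_k / a_k) a projects onto it
   with kernel {g | g_k = 0}.  For such g, |g + mu a| >= |g| + |mu| (2|a_k| - 1) > |g|,
   which is property (SU).
   Conversely let P be a norm-one projection onto span a satisfying the (SU) inequality, and
   pick m <> k with a_m <> 0, so that |a_m| <= 1 - |a_k| < 1/2.  Then P e_m <> 0, for otherwise
   P would map a - a_m e_m, of norm 1 - |a_m|, to a.  Writing P e_m = mu a, the (SU) inequality
   for g = e_m - P e_m reads 1 > |e_m - mu a| >= 1 + |mu| (1 - 2|a_m|), a contradiction. *)

Definition single (k : nat) (c : R) : seqR := fun n => if Nat.eqb n k then c else 0.

Lemma single_eq k c : single k c k = c.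
Proof. unfold single. now rewrite Nat.eqb_refl. Qed.

Lemma single_neq k c n : n <> k -> single k c n = 0.
Proof. intro H. unfold single. now rewrite (proj2 (Nat.eqb_neq n k) H). Qed.

Lemma Rabs_single k c n : Rabs (single k c n) = single k (Rabs c) n.
Proof.
  destruct (Nat.eq_dec n k) as [-> | H].
  - now rewrite !single_eq.
  - now rewrite !single_neq, Rabs_R0.
Qed.

Lemma single_scal k c : single k c = seq_scal c (single k 1).
Proof.
  apply functional_extensionality; intro n. unfold seq_scal.
  destruct (Nat.eq_dec n k) as [-> | H].
  - rewrite !single_eq; ring.
  - rewrite !single_neq by exact H; ring.
Qed.

Lemma sum_f_R0_single k c N : sum_f_R0 (single k c) N = if Nat.leb k N then c else 0.
Proof.
  induction N as [|N IH]; simpl.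
  - destruct k; [apply single_eq | now apply single_neq].
  - rewrite IH. destruct (Nat.eq_dec (S N) k) as [<- | H].
    + rewrite single_eq, Nat.leb_refl.
      replace (Nat.leb (S N) N) with false by (symmetry; apply Nat.leb_gt; lia). ring.
    + rewrite single_neq by exact H.
      destruct (Nat.leb k N) eqn:E1, (Nat.leb k (S N)) eqn:E2;
        try apply Nat.leb_le in E1; try apply Nat.leb_gt in E1;
        try apply Nat.leb_le in E2; try apply Nat.leb_gt in E2;
        first [ring | lia].
Qed.

Lemma is_series_single k c : is_series (single k c) c.
Proof.
  change (is_lim_seq (sum_n (single k c)) c).
  apply is_lim_seq_ext_loc with (fun _ => c); [|apply is_lim_seq_const].
  exists k. intros n Hn. rewrite sum_n_Reals, sum_f_R0_single.
  now replace (Nat.leb k n) with true by (symmetry; apply Nat.leb_le; lia).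
Qed.

Lemma is_lim_seq_single k c : is_lim_seq (single k c) 0.
Proof.
  apply is_lim_seq_ext_loc with (fun _ => 0); [|apply is_lim_seq_const].
  exists (S k). intros n Hn. symmetry. apply single_neq. lia.
Qed.

Lemma is_series_le f g lf lg :
  is_series f lf -> is_series g lg -> (forall n, f n <= g n) -> lf <= lg.
Proof.
  intros Hf Hg H.
  exact (is_lim_seq_le (sum_n f) (sum_n g) lf lg (fun N => sum_n_m_le f g 0 N H) Hf Hg).
Qed.

Lemma in_l1_dominated u b : ex_series b -> (forall n, Rabs (u n) <= b n) -> in_l1 u.
Proof.
  intros Hb H. apply (@ex_series_le R_AbsRing R_CompleteNormedModule _ b); auto.
  intro n. change (Rabs (Rabs (u n)) <= b n). now rewrite Rabs_Rabsolu.
Qed.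

Lemma in_l1_scal c u : in_l1 u -> in_l1 (seq_scal c u).
Proof.
  intro Hu. apply in_l1_dominated with (fun n => Rabs c * Rabs (u n)).
  - exact (ex_series_scal_l (Rabs c) _ Hu).
  - intro n. unfold seq_scal. rewrite Rabs_mult. apply Rle_refl.
Qed.

Lemma in_l1_add u v : in_l1 u -> in_l1 v -> in_l1 (seq_add u v).
Proof.
  intros Hu Hv. apply in_l1_dominated with (fun n => Rabs (u n) + Rabs (v n)).
  - exact (ex_series_plus _ _ Hu Hv).
  - intro n. apply Rabs_triang.
Qed.

Lemma in_l1_sub u v : in_l1 u -> in_l1 v -> in_l1 (seq_sub u v).
Proof.
  intros Hu Hv. apply in_l1_dominated with (fun n => Rabs (u n) + Rabs (v n)).
  - exact (ex_series_plus _ _ Hu Hv).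
  - intro n. rewrite <- (Rabs_Ropp (v n)). apply Rabs_triang.
Qed.

Lemma in_l1_single k c : in_l1 (single k c).
Proof.
  apply in_l1_dominated with (single k (Rabs c)).
  - exists (Rabs c). apply is_series_single.
  - intro n. rewrite Rabs_single. apply Rle_refl.
Qed.

Lemma l1norm_scal c u : in_l1 u -> l1norm (seq_scal c u) = Rabs c * l1norm u.
Proof.
  intro Hu. unfold l1norm, seq_scal. rewrite <- Series_scal_l.
  apply Series_ext. intro n. apply Rabs_mult.
Qed.

Lemma l1norm_single k c : l1norm (single k c) = Rabs c.
Proof.
  unfold l1norm. rewrite (Series_ext _ (single k (Rabs c))) by apply Rabs_single.
  apply is_series_unique, is_series_single.
Qed.

Lemma l1norm_ge_series u G s :
  in_l1 u -> is_series G s -> (forall n, G n <= Rabs (u n)) -> s <= l1norm u.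
Proof. intros Hu HG H. exact (is_series_le _ _ _ _ HG (Series_correct _ Hu) H). Qed.

Lemma Rabs_le_l1norm u k : in_l1 u -> Rabs (u k) <= l1norm u.
Proof.
  intro Hu. apply l1norm_ge_series with (single k (Rabs (u k))); [exact Hu | apply is_series_single |].
  intro n. destruct (Nat.eq_dec n k) as [-> | H].
  - rewrite single_eq. apply Rle_refl.
  - rewrite single_neq by exact H. apply Rabs_pos.
Qed.

Lemma Rabs_add_Rabs_le_l1norm u m k :
  in_l1 u -> m <> k -> Rabs (u m) + Rabs (u k) <= l1norm u.
Proof.
  intros Hu Hmk.
  apply l1norm_ge_series with (fun n => single m (Rabs (u m)) n + single k (Rabs (u k)) n);
    [exact Hu | exact (is_series_plus _ _ _ _ (is_series_single m _) (is_series_single k _)) |].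
  intro n. destruct (Nat.eq_dec n m) as [-> | Hm].
  - rewrite single_eq, single_neq by exact Hmk. lra.
  - rewrite (single_neq m) by exact Hm. destruct (Nat.eq_dec n k) as [-> | Hk].
    + rewrite single_eq. lra.
    + rewrite single_neq by exact Hk. pose proof (Rabs_pos (u n)). lra.
Qed.

Lemma l1norm_sub_single u k :
  in_l1 u -> l1norm (seq_sub u (single k (u k))) = l1norm u - Rabs (u k).
Proof.
  intro Hu. unfold l1norm.
  rewrite (Series_ext _ (fun n => Rabs (u n) - single k (Rabs (u k)) n)).
  - apply is_series_unique.
    exact (is_series_minus _ _ _ _ (Series_correct _ Hu) (is_series_single k _)).
  - intro n. unfold seq_sub. destruct (Nat.eq_dec n k) as [-> | H].
    + rewrite !single_eq, Rminus_eq_0, Rabs_R0. ring.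
    + rewrite !single_neq by exact H. now rewrite !Rminus_0_r.
Qed.

(* Triangle inequality on all coordinates but [k], reversed triangle inequality at [k]. *)
Lemma l1norm_add_ge u v k : in_l1 u -> in_l1 v ->
  l1norm u - l1norm v + 2 * (Rabs (v k) - Rabs (u k)) <= l1norm (seq_add u v).
Proof.
  intros Hu Hv.
  apply l1norm_ge_series with
    (fun n => Rabs (u n) - Rabs (v n) + single k (2 * (Rabs (v k) - Rabs (u k))) n).
  - now apply in_l1_add.
  - exact (is_series_plus _ _ _ _
      (is_series_minus _ _ _ _ (Series_correct _ Hu) (Series_correct _ Hv)) (is_series_single k _)).
  - intro n. unfold seq_add.
    pose proof (Rabs_triang (u n + v n) (- v n)) as Hu'.
    pose proof (Rabs_triang (u n + v n) (- u n)) as Hv'.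
    rewrite Rabs_Ropp in Hu', Hv'.
    replace (u n + v n + - v n) with (u n) in Hu' by ring.
    replace (u n + v n + - u n) with (v n) in Hv' by ring.
    destruct (Nat.eq_dec n k) as [-> | H].
    + rewrite single_eq. lra.
    + rewrite single_neq by exact H. lra.
Qed.

Lemma exists_other_nonzero u k :
  Rabs (u k) < l1norm u -> exists m, m <> k /\ u m <> 0.
Proof.
  intro Hlt. apply NNPP. intro Hno. apply (Rlt_irrefl (Rabs (u k))).
  replace u with (single k (u k)) in Hlt at 2; [now rewrite l1norm_single in Hlt |].
  apply functional_extensionality; intro n. destruct (Nat.eq_dec n k) as [-> | H].
  - apply single_eq.
  - rewrite single_neq by exact H. apply NNPP. intro Hn. apply Hno. now exists n.
Qed.

Lemma pairing_sub_single b m k c :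
  pairing b (seq_sub (single m 1) (single k c)) = b m - c * b k.
Proof.
  unfold pairing.
  rewrite (Series_ext _ (fun n => single m (b m) n - single k (c * b k) n)).
  - apply is_series_unique.
    exact (is_series_minus _ _ _ _ (is_series_single m _) (is_series_single k _)).
  - intro n. unfold seq_sub.
    destruct (Nat.eq_dec n m) as [Hm | Hm], (Nat.eq_dec n k) as [Hk | Hk]; subst;
      rewrite ?single_eq, ?single_neq by assumption; ring.
Qed.

Lemma annihilator_hyperplane_eq a k b :
  a k <> 0 -> annihilator (hyperplane a) b -> b = seq_scal (b k / a k) a.
Proof.
  intros Hak [_ Hb]. apply functional_extensionality; intro m. unfold seq_scal.
  set (y := seq_sub (single m 1) (single k (a m / a k))).
  assert (Hy : hyperplane a y).
  { split.
    - unfold in_c0, y, seq_sub.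
      replace (Finite 0) with (Rbar_minus 0 0) by (simpl; f_equal; ring).
      apply is_lim_seq_minus'; apply is_lim_seq_single.
    - unfold y. rewrite pairing_sub_single. field. exact Hak. }
  specialize (Hb y Hy). unfold y in Hb. rewrite pairing_sub_single in Hb.
  replace (b k / a k * a m) with (a m / a k * b k) by (field; exact Hak). lra.
Qed.

Lemma annihilator_hyperplane_scal a c : in_l1 a -> annihilator (hyperplane a) (seq_scal c a).
Proof.
  intro Ha. split; [now apply in_l1_scal |].
  intros y [_ Hy]. unfold pairing, seq_scal in *.
  rewrite (Series_ext _ (fun n => c * (a n * y n))) by (intro; ring).
  rewrite Series_scal_l, Hy. ring.
Qed.

Section Projection.

Variables (P : seqR -> seqR) (M : seqR -> Prop).
Hypothesis HP : bdd_lin_proj_onto P M.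

Lemma proj_fixes_range y : M y -> P y = y.
Proof.
  intro Hy. destruct HP as (_ & _ & _ & _ & Pidem & _ & Ponto).
  destruct (Ponto y Hy) as [x [Hx <-]]. now apply Pidem.
Qed.

Lemma proj_sub x y : in_l1 x -> in_l1 y -> P (seq_sub x y) = seq_sub (P x) (P y).
Proof.
  intros Hx Hy. destruct HP as (_ & Padd & Pscal & _).
  replace (seq_sub x y) with (seq_add x (seq_scal (-1) y))
    by (apply functional_extensionality; intro n; unfold seq_add, seq_sub, seq_scal; ring).
  rewrite Padd, Pscal by (try apply in_l1_scal; assumption).
  apply functional_extensionality; intro n. unfold seq_add, seq_sub, seq_scal. ring.
Qed.

Lemma proj_single k c : P (single k c) = seq_scal c (P (single k 1)).
Proof. destruct HP as (_ & _ & Pscal & _). rewrite single_scal. apply Pscal, in_l1_single. Qed.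

Lemma contractive_proj_single_neq0 a m :
  (forall x, in_l1 x -> l1norm (P x) <= l1norm x) ->
  M a -> in_l1 a -> a m <> 0 -> P (single m 1) <> seq_zero.
Proof.
  intros Hcontr HMa Ha Ham Hz.
  assert (HPa : P (seq_sub a (single m (a m))) = a).
  { rewrite proj_sub, proj_single, Hz, proj_fixes_range by (try apply in_l1_single; assumption).
    apply functional_extensionality; intro n. unfold seq_sub, seq_scal, seq_zero. ring. }
  pose proof (Hcontr _ (in_l1_sub _ _ Ha (in_l1_single m (a m)))) as Hle.
  rewrite HPa, l1norm_sub_single in Hle by exact Ha.
  pose proof (Rabs_pos_lt _ Ham). lra.
Qed.

End Projection.

Definition coord_proj (a : seqR) (k : nat) (x : seqR) : seqR := seq_scal (x k / a k) a.

Lemma coord_proj_bdd_lin_proj a k : in_l1 a -> a k <> 0 ->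
  bdd_lin_proj_onto (coord_proj a k) (annihilator (hyperplane a)).
Proof.
  intros Ha Hak. unfold coord_proj.
  split; [|split; [|split; [|split; [|split; [|split]]]]].
  - intros x _. now apply in_l1_scal.
  - intros x y _ _. apply functional_extensionality; intro n.
    unfold seq_add, seq_scal. field. exact Hak.
  - intros c x _. apply functional_extensionality; intro n.
    unfold seq_scal. field. exact Hak.
  - exists (l1norm a / Rabs (a k)). intros x Hx.
    rewrite l1norm_scal by exact Ha. unfold Rdiv. rewrite Rabs_mult, Rabs_inv.
    replace (Rabs (x k) * / Rabs (a k) * l1norm a)
      with (l1norm a * / Rabs (a k) * Rabs (x k)) by ring.
    apply Rmult_le_compat_l; [| now apply Rabs_le_l1norm].
    apply Rmult_le_pos.
    + exact (Rle_trans _ _ _ (Rabs_pos (a k)) (Rabs_le_l1norm a k Ha)).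
    + left. now apply Rinv_0_lt_compat, Rabs_pos_lt.
  - intros x _. apply functional_extensionality; intro n.
    unfold seq_scal. f_equal. field. exact Hak.
  - intros x _. now apply annihilator_hyperplane_scal.
  - intros y Hy. exists y. split; [apply Hy |].
    symmetry. now apply annihilator_hyperplane_eq.
Qed.

Lemma l1norm_add_scal_ge g a mu k : in_l1 g -> in_l1 a -> g k = 0 ->
  l1norm g + Rabs mu * (2 * Rabs (a k) - l1norm a) <= l1norm (seq_add g (seq_scal mu a)).
Proof.
  intros Hg Ha Hgk.
  pose proof (l1norm_add_ge _ _ k Hg (in_l1_scal mu a Ha)) as Hle.
  rewrite l1norm_scal, Hgk, Rabs_R0 in Hle by exact Ha.
  change (seq_scal mu a k) with (mu * a k) in Hle. rewrite Rabs_mult in Hle.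
  lra.
Qed.

Lemma l1norm_single_sub_scal_ge a mu m : in_l1 a ->
  1 + Rabs mu * (l1norm a - 2 * Rabs (a m)) <= l1norm (seq_sub (single m 1) (seq_scal mu a)).
Proof.
  intro Ha.
  replace (seq_sub (single m 1) (seq_scal mu a)) with (seq_add (seq_scal (- mu) a) (single m 1))
    by (apply functional_extensionality; intro n; unfold seq_add, seq_sub, seq_scal; ring).
  pose proof (l1norm_add_ge _ _ m (in_l1_scal (- mu) a Ha) (in_l1_single m 1)) as Hle.
  rewrite l1norm_scal, l1norm_single, single_eq, Rabs_R1 in Hle by exact Ha.
  change (seq_scal (- mu) a m) with (- mu * a m) in Hle. rewrite Rabs_mult, Rabs_Ropp in Hle.
  lra.
Qed.

Lemma seq_scal_neq0 c u : seq_scal c u <> seq_zero -> 0 < Rabs c.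
Proof.
  intro Hne. apply Rabs_pos_lt. intro Z. apply Hne.
  apply functional_extensionality; intro n. unfold seq_scal, seq_zero. rewrite Z. ring.
Qed.

Lemma dominant_coord_neq0 a k : in_l1 a -> l1norm a < 2 * Rabs (a k) -> a k <> 0.
Proof. intros Ha Hk Z. pose proof (Rabs_le_l1norm a k Ha). rewrite Z, Rabs_R0 in *. lra. Qed.

Lemma coord_proj_SU a k : in_l1 a -> l1norm a < 2 * Rabs (a k) ->
  SU_ineq (hyperplane a) (coord_proj a k).
Proof.
  intros Ha Hk g yp [x [Hx ->]] Hyp Hne. unfold coord_proj.
  pose proof (dominant_coord_neq0 a k Ha Hk) as Hak.
  rewrite (annihilator_hyperplane_eq a k yp Hak Hyp) in Hne |- *.
  pose proof (seq_scal_neq0 _ _ Hne) as Hmu.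
  assert (Hgk : seq_sub x (seq_scal (x k / a k) a) k = 0)
    by (unfold seq_sub, seq_scal; field; exact Hak).
  pose proof (l1norm_add_scal_ge _ a (yp k / a k) k
                (in_l1_sub _ _ Hx (in_l1_scal _ _ Ha)) Ha Hgk).
  assert (0 < Rabs (yp k / a k) * (2 * Rabs (a k) - l1norm a)) by (apply Rmult_lt_0_compat; lra).
  lra.
Qed.

Lemma hyperplane_property_SU a k : in_l1 a -> l1norm a < 2 * Rabs (a k) ->
  property_SU (hyperplane a).
Proof.
  intros Ha Hk. exists (coord_proj a k). split; [| now apply coord_proj_SU].
  apply coord_proj_bdd_lin_proj; [exact Ha | now apply dominant_coord_neq0].
Qed.

Lemma hyperplane_not_property_HB a k :
  in_l1 a -> l1norm a < 2 * Rabs (a k) -> Rabs (a k) < l1norm a ->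
  ~ property_HB (hyperplane a).
Proof.
  intros Ha Hk Hlt [P [HP [SU [[Pnorm _] _]]]].
  pose proof HP as (_ & _ & _ & _ & _ & Prange & _).
  pose proof (dominant_coord_neq0 a k Ha Hk) as Hak.
  destruct (exists_other_nonzero a k Hlt) as [m [Hmk Ham]].
  pose proof (Rabs_add_Rabs_le_l1norm a m k Ha Hmk) as Hsmall.
  assert (He : in_l1 (single m 1)) by apply in_l1_single.
  assert (HPe : P (single m 1) <> seq_zero).
  { apply (contractive_proj_single_neq0 P _ HP a m); [| | exact Ha | exact Ham].
    - intros x Hx. rewrite <- Rmult_1_l. now apply Pnorm.
    - replace a with (seq_scal 1 a) at 2
        by (apply functional_extensionality; intro n; unfold seq_scal; ring).
      now apply annihilator_hyperplane_scal. }
  pose proof (SU _ _ (ex_intro _ _ (conj He eq_refl)) (Prange _ He) HPe) as Hsu.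
  replace (seq_add (seq_sub (single m 1) (P (single m 1))) (P (single m 1))) with (single m 1)
    in Hsu by (apply functional_extensionality; intro n; unfold seq_add, seq_sub; ring).
  rewrite l1norm_single, Rabs_R1 in Hsu.
  rewrite (annihilator_hyperplane_eq a k _ Hak (Prange _ He)) in Hsu, HPe.
  pose proof (seq_scal_neq0 _ _ HPe) as Hmu.
  pose proof (l1norm_single_sub_scal_ge a (P (single m 1) k / a k) m Ha).
  assert (0 < Rabs (P (single m 1) k / a k) * (l1norm a - 2 * Rabs (a m)))
    by (apply Rmult_lt_0_compat; lra).
  lra.
Qed.

Lemma lub_range_gt (f : nat -> R) s c :
  is_lub (fun r => exists n, r = f n) s -> c < s -> exists n, c < f n.
Proof.
  intros [_ Hlub] Hcs. apply NNPP. intro Hno.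
  assert (s <= c).
  { apply Hlub. intros r [n ->]. apply Rnot_lt_le. intro Hn. apply Hno. now exists n. }
  lra.
Qed.

Theorem theorem3p16 (a : nat -> R) :
  in_l1 a ->
  l1norm a = 1 ->
  (exists s, is_lub (fun r => exists n, r = Rabs (a n)) s /\ 1/2 < s /\ s < 1) ->
  property_SU (hyperplane a) /\ ~ property_HB (hyperplane a).
Proof.
  intros Ha H1 [s [Hlub [Hs1 Hs2]]].
  destruct (lub_range_gt _ _ _ Hlub Hs1) as [k Hk].
  assert (Rabs (a k) <= s) by (apply (proj1 Hlub); now exists k).
  split.
  - apply (hyperplane_property_SU a k); [exact Ha | lra].
  - apply (hyperplane_not_property_HB a k); [exact Ha | lra | lra].
Qed.
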